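(* Let $n,g,k$ be integers with $1\leq g\leq \left\lfloor \frac{n-k-2}{2}\right\rfloor$. Let $G^k_n$ be the graph obtained from three disjoint cliques $K_{n-k-g}$, $K_{k-1}$, $K_{g+1}$ by adding all edges between $V(K_{n-k-g})$ and $V(K_{k-1})$ and all edges between $V(K_{g+1})$ and $V(K_{k-1})$. Then $\kappa^g(G^k_n)=k-1$.
   Context: For a connected graph $G=(V,E)$ and integer $g\ge0$: a set $F\subseteq V$ is a $g$-good-neighbor faulty set if $|N(v)\cap (V-F)|\geq g$ for every $v\in V-F$; a $g$-good-neighbor cut is such an $F$ with $G-F$ disconnected; $\kappa^g(G)$ is the minimum cardinality of a $g$-good-neighbor cut. *)

From mathcomp Require Import all_boot.
Set Implicit Arguments. Unset Strict Implicit. Unset Printing Implicit Defensive.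

(* A simple graph on a finite vertex type T is given by an adjacency relation e
   (assumed symmetric and irreflexive where relevant). *)

Definition nbhd (T : finType) (e : rel T) (v : T) : {set T} := [set u | e v u].

Definition good_neighbor_faulty (T : finType) (e : rel T) (g : nat) (F : {set T}) :=
  forall v : T, v \in ~: F -> g <= #|nbhd e v :&: ~: F|.

Definition del_rel (T : finType) (e : rel T) (F : {set T}) : rel T :=
  [rel x y | [&& e x y, x \notin F & y \notin F]].

Definition disconnected_after (T : finType) (e : rel T) (F : {set T}) :=
  exists u v : T, [/\ u \notin F, v \notin F & ~~ connect (del_rel e F) u v].

Definition good_neighbor_cut (T : finType) (e : rel T) (g : nat) (F : {set T}) :=
  good_neighbor_faulty e g F /\ disconnected_after e F.

Definition kappa_g_eq (T : finType) (e : rel T) (g m : nat) :=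
  (exists F : {set T}, good_neighbor_cut e g F /\ #|F| = m) /\
  (forall F : {set T}, good_neighbor_cut e g F -> m <= #|F|).

(* The graph G^k_n: vertices of K_{n-k-g} (inl (inl _)), K_{k-1} (inl (inr _)),
   K_{g+1} (inr _). *)
Definition Gvert (n k g : nat) : finType :=
  ('I_(n - k - g) + 'I_(k - 1) + 'I_(g + 1))%type.

Definition blk (n k g : nat) (x : Gvert n k g) : nat :=
  match x with inl (inl _) => 0 | inl (inr _) => 1 | inr _ => 2 end.

Definition Gedge (n k g : nat) : rel (Gvert n k g) :=
  fun x y => (x != y) &&
    ((blk x == blk y) || (blk x == 1) || (blk y == 1)).

(* A vertex of K_{k-1} is adjacent to every other vertex, so it survives in no
   disconnecting set: every cut contains K_{k-1}, hence has at least k - 1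
   vertices.  Conversely, deleting K_{k-1} separates K_{n-k-g} from K_{g+1}, and
   every remaining vertex keeps its clique mates, at least g of them since
   |K_{g+1}| = g + 1 and |K_{n-k-g}| >= g + 2. *)
From mathcomp Require Import all_boot.
From mathcomp Require Import zify.

Section DominatingVertex.
Variables (T : finType) (e : rel T) (F : {set T}) (b : T).
Hypothesis b_dominating : forall x, x != b -> e x b && e b x.

Lemma connect_del_dominating u v :
  b \notin F -> u \notin F -> v \notin F -> connect (del_rel e F) u v.
Proof.
move=> bF uF vF.
have edge_b x : x \notin F -> x != b -> del_rel e F x b && del_rel e F b x.
  move=> xF xb; have /andP[exb ebx] := b_dominating x xb.
  by rewrite /del_rel /= exb ebx xF bF.
apply: (@connect_trans _ _ b).
  case: (eqVneq u b) => [->|ub]; first exact: connect0.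
  by apply: connect1; case/andP: (edge_b u uF ub).
case: (eqVneq v b) => [->|vb]; first exact: connect0.
by apply: connect1; case/andP: (edge_b v vF vb).
Qed.

Lemma dominating_in_disconnecting : disconnected_after e F -> b \in F.
Proof.
case=> u [v [uF vF not_uv]]; apply: contraNT not_uv => bF.
exact: connect_del_dominating.
Qed.

End DominatingVertex.

Section GraphGkn.
Variables n k g : nat.
Local Notation V := (Gvert n k g).
Local Notation e := (@Gedge n k g).

Definition block (i : nat) : {set V} := [set x | blk x == i].

Lemma card_block i m (f : 'I_m -> V) :
  injective f -> (forall j, blk (f j) = i) ->
  (forall x, blk x = i -> exists j, x = f j) -> #|block i| = m.
Proof.
move=> f_inj f_blk f_onto; rewrite -[m]card_ord -(card_imset _ f_inj).
apply: eq_card => x; rewrite !inE.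
apply/eqP/imsetP => [/f_onto[j ->]|[j _ ->]]; last exact: f_blk.
by exists j.
Qed.

Lemma card_block0 : #|block 0| = n - k - g.
Proof.
apply: (@card_block _ _ (fun j => inl (inl j))) => [a b [] //|//|].
by case=> [[a|b]|c] // _; exists a.
Qed.

Lemma card_block1 : #|block 1| = k - 1.
Proof.
apply: (@card_block _ _ (fun j => inl (inr j))) => [a b [] //|//|].
by case=> [[a|b]|c] // _; exists b.
Qed.

Lemma card_block2 : #|block 2| = g + 1.
Proof.
apply: (@card_block _ _ inr) => [a b [] //|//|].
by case=> [[a|b]|c] // _; exists c.
Qed.

Lemma block1_dominating (b x : V) : blk b = 1 -> x != b -> e x b && e b x.
Proof. by move=> b1 xb; rewrite /Gedge /= (eq_sym b) xb b1 !orbT. Qed.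

Lemma block_clique_nbhd (v : V) :
  blk v != 1 -> #|block (blk v)| - 1 <= #|nbhd e v :&: ~: block 1|.
Proof.
move=> v_out; rewrite (cardsD1 v) inE eqxx add1n subn1 /=.
apply/subset_leq_card/subsetP => x; rewrite !inE => /andP[xv /eqP xblk].
by rewrite /Gedge /= eq_sym xv xblk eqxx v_out.
Qed.

Lemma del_block1_same_blk (x y : V) :
  connect (del_rel e (block 1)) x y -> blk x = blk y.
Proof.
have closed_blk : closed (del_rel e (block 1)) (mem (block (blk x))).
  move=> u w /and3P[/andP[_ uw] uout wout]; rewrite !inE in uout wout.
  by rewrite (negbTE uout) (negbTE wout) !orbF in uw; rewrite !inE (eqP uw).
by move/(closed_connect closed_blk); rewrite !inE eqxx => /esym/eqP.
Qed.

Lemma block1_disconnects : 1 <= n - k - g -> disconnected_after e (block 1).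
Proof.
move=> A_nonempty.
have C_nonempty : 0 < g + 1 by rewrite addn1.
exists (inl (inl (Ordinal A_nonempty))), (inr (Ordinal C_nonempty)).
by split; rewrite ?inE //; apply/negP => /del_block1_same_blk.
Qed.

Lemma block1_good_neighbor_faulty :
  g + 1 <= n - k - g -> good_neighbor_faulty e g (block 1).
Proof.
move=> A_large v; rewrite !inE => v_out.
apply: leq_trans _ (block_clique_nbhd v v_out).
by case: v v_out => [[a|b]|c] //= _; rewrite ?card_block0 ?card_block2; lia.
Qed.

End GraphGkn.

Theorem lemma4p4 (n k g : nat) :
  1 <= k -> 1 <= g -> g <= (n - k - 2) %/ 2 ->
  kappa_g_eq (@Gedge n k g) g (k - 1).
Proof.
move=> _ g_pos g_le; have A_large : g + 1 <= n - k - g by lia.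
split.
  exists (block n k g 1); rewrite card_block1; split => //; split.
    exact: block1_good_neighbor_faulty.
  by apply: block1_disconnects; lia.
move=> F [_ F_disconnects]; rewrite -(card_block1 n k g).
apply/subset_leq_card/subsetP => b; rewrite inE => /eqP b1.
by apply: dominating_in_disconnecting F_disconnects => x; apply: block1_dominating.
Qed.
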